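(* Let $\mathcal V$ be a Monoidal category with countable products, let $C$ be an ordinary coalgebra in $\mathcal V$ and let $X$ be an object of $\mathcal V$. Then the map $\mathrm{hCoalg}(C,X\tilde T)\to\mathcal V(C,X)$, $t\mapsto\check t=t(1)\,\mathrm{pr}_1$ (where $t(1):C\to X\tilde T(1)=\prod_{k\in\mathbb N}X^{\otimes k}$ and $\mathrm{pr}_1$ is the projection onto $X$), is bijective.
   Context: $\mathcal O_{sk}$: objects $\mathbf n=\{1<\dots<n\}$, $n\ge0$ (identified with $n$), morphisms non-decreasing maps; $\sqcup$ ordered disjoint union; composition diagrammatic. $\mathcal V$ has invertible structure isomorphisms $\lambda^\phi:\otimes^{j\in J}\otimes^{i\in\phi^{-1}j}X_i\to\otimes^{i\in I}X_i$. A homotopy coalgebra is a functor $C:\mathcal O_{sk}^{op}\to\mathcal V$ with $\chi^I_{N_1,\dots,N_I}:\otimes^{i\in I}C(N_i)\to C(\sqcup_iN_i)$ natural in the $N_i$, $\chi^{\mathbf1}=\mathrm{id}$, $(\otimes^j\chi^{\phi^{-1}j})\chi^J=\lambda^\phi\chi^I$ for all $\phi:I\to J$; morphisms $t$ are families $t(k):C(k)\to G(k)$ natural in $\mathcal O_{sk}^{op}$ with $\chi^It=(\otimes^It)\gamma^I$. An ordinary coalgebra $C$ ($\Delta_I:C\to C^{\otimes I}$, $\Delta_{\mathbf1}=\mathrm{id}$, $\Delta_I=\Delta_J(\otimes_j\Delta_{\phi^{-1}j})\lambda^\phi$) is regarded as the homotopy coalgebra $C(J)=C^{\otimes J}$,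 $C(\phi^{op})=(\otimes_j\Delta_{\phi^{-1}j})\lambda^\phi$, $\chi^I_{n_1,\dots,n_I}=\lambda^{\sqcup_i\mathbf n_i\to I}$. The homotopy coalgebra $X\tilde T$: $X\tilde T(I)=\prod_{n\in\mathbb N^I}X^{\otimes\|n\|}$ with $\|n\|=\sum_in_i$; for $\phi:I\to J$ and $n\in\mathbb N^I$, $X\tilde T(\phi^{op})\mathrm{pr}_n=\mathrm{pr}_{\phi_*n}$ where $(\phi_*n)_j=\sum_{i\in\phi^{-1}j}n_i$; for $n=n_1\oplus\dots\oplus n_I\in\mathbb N^{N_1}\oplus\dots\oplus\mathbb N^{N_I}=\mathbb N^{\sqcup_iN_i}$, $\chi^I_{N_1,\dots,N_I}\mathrm{pr}_n=(\otimes^{i\in I}\mathrm{pr}_{n_i})\lambda^{\psi}$ with $\psi:\sqcup_i\mathbf{\|n_i\|}\to I$ sending the $i$-th block to $i$. *)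

(* Unbiased ("Monoidal" in the sense of
   Bespalov--Lyubashenko--Manzyuk) monoidal categories, encoded with lists. *)
From mathcomp Require Import all_boot.

Set Implicit Arguments.
Unset Strict Implicit.
Unset Printing Implicit Defensive.

Fixpoint HomL (Ob : Type) (Hom : Ob -> Ob -> Type) (xs ys : seq Ob) {struct xs} : Type :=
  match xs, ys with
  | [::], [::] => unit
  | x :: xs', y :: ys' => (Hom x y * HomL Hom xs' ys')%type
  | _, _ => Empty_set
  end.

(* Raw data of a Monoidal category with (chosen) countable products.
   [tensor xs] is the unbiased tensor product of the finite family xs
   (indexed by the object |xs| of O_sk); [lam L] is
   lambda^phi : (x)^{j in J} (x)^{i in phi^-1 j} X_i -> (x)^{i in I} X_i
   for the non-decreasing map phi : I -> J whose fibres are the blocks of L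
   (L : seq (seq Ob) of length J, flatten L the family (X_i)_{i in I}).
   [tensor1] is the strict equality (x)^{1} = Id on objects. *)
Record MonCatData := MkMonCat {
  Ob : Type;
  Hom : Ob -> Ob -> Type;
  idH : forall A, Hom A A;
  compH : forall A B C, Hom A B -> Hom B C -> Hom A C; (* diagrammatic *)
  tensor : seq Ob -> Ob;
  tensorH : forall xs ys, HomL Hom xs ys -> Hom (tensor xs) (tensor ys);
  tensor1 : forall x, tensor [:: x] = x;
  lam : forall L : seq (seq Ob), Hom (tensor (map tensor L)) (tensor (flatten L));
  prodO : forall T : countType, (T -> Ob) -> Ob;
  projH : forall (T : countType) (F : T -> Ob) (t : T), Hom (prodO F) (F t);
  tupH : forall (T : countType) (F : T -> Ob) (A : Ob),
           (forall t, Hom A (F t)) -> Hom A (prodO F) }.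

Arguments Hom {_} _ _.
Arguments idH {_} _.
Arguments compH {_ _ _ _} _ _.
Arguments tensor {_} _.
Arguments tensorH {_ _ _} _.
Arguments tensor1 {_} _.
Arguments lam {_} _.
Arguments prodO {_ _} _.
Arguments projH {_ _ _} _.
Arguments tupH {_ _ _ _} _.

Definition castH (V : MonCatData) (A B : Ob V) (e : A = B) : Hom A B :=
  match e in _ = B' return Hom A B' with erefl => idH A end.
Arguments castH {V A B} e.

Section ListOps.
Variable V : MonCatData.

Fixpoint idL (xs : seq (Ob V)) : HomL (@Hom V) xs xs :=
  match xs return HomL (@Hom V) xs xs with
  | [::] => tt
  | x :: xs' => (idH x, idL xs')
  end.

Fixpoint compL (xs ys zs : seq (Ob V)) {struct xs} :
  HomL (@Hom V) xs ys -> HomL (@Hom V) ys zs -> HomL (@Hom V) xs zs :=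
  match xs, ys, zs return
        HomL (@Hom V) xs ys -> HomL (@Hom V) ys zs -> HomL (@Hom V) xs zs with
  | [::], [::], [::] => fun _ _ => tt
  | x :: xs', y :: ys', z :: zs' =>
      fun F G => (compH F.1 G.1, @compL xs' ys' zs' F.2 G.2)
  | [::], [::], _ :: _ => fun _ G => match G with end
  | [::], _ :: _, _ => fun F _ => match F with end
  | _ :: _, [::], _ => fun F _ => match F with end
  | _ :: _, _ :: _, [::] => fun _ G => match G with end
  end.

Fixpoint catL (xs ys xs2 ys2 : seq (Ob V)) {struct xs} :
  HomL (@Hom V) xs ys -> HomL (@Hom V) xs2 ys2 ->
  HomL (@Hom V) (xs ++ xs2) (ys ++ ys2) :=
  match xs, ys return HomL (@Hom V) xs ys -> HomL (@Hom V) xs2 ys2 ->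
                      HomL (@Hom V) (xs ++ xs2) (ys ++ ys2) with
  | [::], [::] => fun _ G => G
  | x :: xs', y :: ys' => fun F G => (F.1, @catL xs' ys' xs2 ys2 F.2 G)
  | [::], _ :: _ => fun F _ => match F with end
  | _ :: _, [::] => fun F _ => match F with end
  end.

Fixpoint flattenH (L L' : seq (seq (Ob V))) {struct L} :
  HomL (HomL (@Hom V)) L L' -> HomL (@Hom V) (flatten L) (flatten L') :=
  match L, L' return HomL (HomL (@Hom V)) L L' ->
                     HomL (@Hom V) (flatten L) (flatten L') with
  | [::], [::] => fun _ => tt
  | l :: L0, l' :: L0' => fun F => catL F.1 (@flattenH L0 L0' F.2)
  | [::], _ :: _ => fun F => match F with end
  | _ :: _, [::] => fun F => match F with end
  end.

Fixpoint mapTH (L L' : seq (seq (Ob V))) {struct L} :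
  HomL (HomL (@Hom V)) L L' -> HomL (@Hom V) (map tensor L) (map tensor L') :=
  match L, L' return HomL (HomL (@Hom V)) L L' ->
                     HomL (@Hom V) (map tensor L) (map tensor L') with
  | [::], [::] => fun _ => tt
  | l :: L0, l' :: L0' => fun F => (tensorH F.1, @mapTH L0 L0' F.2)
  | [::], _ :: _ => fun F => match F with end
  | _ :: _, [::] => fun F => match F with end
  end.

(* (x)^{k in K} lambda^{f_k} for the composite I -f-> J -g-> K *)
Fixpoint lamL (LLL : seq (seq (seq (Ob V)))) :
  HomL (@Hom V) (map tensor (map (map tensor) LLL)) (map tensor (map flatten LLL)) :=
  match LLL return HomL (@Hom V) (map tensor (map (map tensor) LLL))
                               (map tensor (map flatten LLL)) with
  | [::] => tt
  | LL :: r => (lam LL, lamL r)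
  end.

Lemma lamid_eq (xs : seq (Ob V)) :
  tensor (map tensor (map (fun x => [:: x]) xs)) =
  tensor (flatten (map (fun x => [:: x]) xs)).
Proof.
congr tensor; elim: xs => [|x xs IH] //=; by rewrite tensor1 IH.
Qed.

Lemma lam1_eq (xs : seq (Ob V)) :
  tensor (map tensor [:: xs]) = tensor (flatten [:: xs]).
Proof. by rewrite /= tensor1 cats0. Qed.

Lemma coh_eq1 (LLL : seq (seq (seq (Ob V)))) :
  tensor (flatten (map (map tensor) LLL)) = tensor (map tensor (flatten LLL)).
Proof. by rewrite map_flatten. Qed.

Lemma coh_eq2 (LLL : seq (seq (seq (Ob V)))) :
  tensor (flatten (map flatten LLL)) = tensor (flatten (flatten LLL)).
Proof.
congr tensor; elim: LLL => [|l r IH] //=; by rewrite flatten_cat IH.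
Qed.

End ListOps.

Definition is_Monoidal (V : MonCatData) : Prop :=
  [/\ [/\ (forall (A B : Ob V) (f : Hom A B), compH (idH A) f = f),
      (forall (A B : Ob V) (f : Hom A B), compH f (idH B) = f)
      & (forall (A B C D : Ob V) (f : Hom A B) (g : Hom B C) (h : Hom C D),
          compH (compH f g) h = compH f (compH g h))],
   [/\ (forall xs : seq (Ob V), tensorH (idL xs) = idH (tensor xs)),
      (forall (xs ys zs : seq (Ob V)) (F : HomL (@Hom V) xs ys)
              (G : HomL (@Hom V) ys zs),
          tensorH (compL F G) = compH (tensorH F) (tensorH G))
      & (forall (x y : Ob V) (f : Hom x y),
          @tensorH V [:: x] [:: y] (f, tt) =
          compH (castH (tensor1 x)) (compH f (castH (esym (tensor1 y)))))],
   [/\ (forall (L L' : seq (seq (Ob V))) (F : HomL (HomL (@Hom V)) L L'),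
          compH (tensorH (mapTH F)) (lam L') = compH (lam L) (tensorH (flattenH F))),
      (forall L : seq (seq (Ob V)),
          exists g : Hom (tensor (flatten L)) (tensor (map tensor L)),
            compH (lam L) g = idH _ /\ compH g (lam L) = idH _),
      (forall xs : seq (Ob V), lam (map (fun x => [:: x]) xs) = castH (lamid_eq xs)),
      (forall xs : seq (Ob V), lam [:: xs] = castH (lam1_eq xs))
      & (forall LLL : seq (seq (seq (Ob V))),
          compH (compH (lam (map (map tensor) LLL)) (castH (coh_eq1 LLL)))
                (lam (flatten LLL)) =
          compH (compH (tensorH (lamL LLL)) (lam (map flatten LLL)))
                (castH (coh_eq2 LLL)))] &
   ((forall (T : countType) (F : T -> Ob V) (A : Ob V)
               (g : forall t, Hom A (F t)) (t : T),
          compH (tupH g) (projH t) = g t)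
    /\ (forall (T : countType) (F : T -> Ob V) (A : Ob V) (h : Hom A (prodO F)),
          h = tupH (fun t => compH h (projH t))))].

(* A morphism phi : I -> J of O_sk (non-decreasing map
   between finite ordinals) is encoded by the sequence cs of the cardinalities
   of its fibres: size cs = J, sumn cs = I (a bijective encoding).
   A homotopy coalgebra datum gives C(n), C(phi^op) : C(J) -> C(I) and
   chi^I_{N_1..N_I} : (x)^{i in I} C(N_i) -> C(N_1 + ... + N_I). *)
Record hdata (V : MonCatData) := HData {
  hob : nat -> Ob V;
  hmap : forall cs : seq nat, Hom (hob (size cs)) (hob (sumn cs));
  hchi : forall Ns : seq nat, Hom (tensor (map hob Ns)) (hob (sumn Ns)) }.
Arguments HData {V} hob hmap hchi.

Fixpoint mapHL (V : MonCatData) (A B : nat -> Ob V)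
    (t : forall k, Hom (A k) (B k)) (Ns : seq nat) :
    HomL (@Hom V) (map A Ns) (map B Ns) :=
  match Ns return HomL (@Hom V) (map A Ns) (map B Ns) with
  | [::] => tt
  | N :: Ns' => (t N, @mapHL V A B t Ns')
  end.

Definition is_hmorph (V : MonCatData) (A B : hdata V)
    (t : forall k, Hom (hob A k) (hob B k)) : Prop :=
  (forall cs : seq nat, compH (t (size cs)) (hmap B cs) = compH (hmap A cs) (t (sumn cs)))
  /\ (forall Ns : seq nat,
        compH (hchi A Ns) (t (sumn Ns)) = compH (tensorH (mapHL t Ns)) (hchi B Ns)).

Definition hCoalgHom (V : MonCatData) (A B : hdata V) :=
  {t : forall k, Hom (hob A k) (hob B k) | is_hmorph t}.

Section Coalg.
Variables (V : MonCatData) (C : Ob V) (Delta : forall n, Hom C (tensor (nseq n C))).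

Fixpoint DeltaL (cs : seq nat) :
  HomL (@Hom V) (nseq (size cs) C) (map tensor (map (fun k => nseq k C) cs)) :=
  match cs return HomL (@Hom V) (nseq (size cs) C)
                               (map tensor (map (fun k => nseq k C) cs)) with
  | [::] => tt
  | c :: r => (Delta c, DeltaL r)
  end.

Lemma flat_nseq_eq (cs : seq nat) :
  tensor (flatten (map (fun k => nseq k C) cs)) = tensor (nseq (sumn cs) C).
Proof. congr tensor; elim: cs => [|c cs IH] //=; by rewrite IH nseqD. Qed.

Lemma mapc_eq (Ns : seq nat) :
  tensor (map (fun n => tensor (nseq n C)) Ns) =
  tensor (map tensor (map (fun n => nseq n C) Ns)).
Proof. by rewrite -map_comp. Qed.

Definition coalg_map (cs : seq nat) :
  Hom (tensor (nseq (size cs) C)) (tensor (nseq (sumn cs) C)) :=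
  compH (tensorH (DeltaL cs))
        (compH (lam (map (fun k => nseq k C) cs)) (castH (flat_nseq_eq cs))).

Definition coalg_chi (Ns : seq nat) :
  Hom (tensor (map (fun n => tensor (nseq n C)) Ns)) (tensor (nseq (sumn Ns) C)) :=
  compH (castH (mapc_eq Ns))
        (compH (lam (map (fun n => nseq n C) Ns)) (castH (flat_nseq_eq Ns))).

Definition is_coalgebra : Prop :=
  Delta 1 = castH (esym (tensor1 C)) /\
  (forall cs : seq nat, Delta (sumn cs) = compH (Delta (size cs)) (coalg_map cs)).

Definition coalg_h : hdata V :=
  HData (fun n => tensor (nseq n C)) coalg_map coalg_chi.
End Coalg.

Section XT.
Variables (V : MonCatData) (X : Ob V).

Definition XTF (k : nat) (n : k.-tuple nat) : Ob V := tensor (nseq (sumn n) X).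
Definition XTob (k : nat) : Ob V := prodO (@XTF k).

Lemma pushT_proof (cs : seq nat) (n : seq nat) :
  size (map sumn (reshape cs n)) == size cs.
Proof. by rewrite size_map size_reshape. Qed.

Definition pushT (cs : seq nat) (n : (sumn cs).-tuple nat) : (size cs).-tuple nat :=
  @Tuple (size cs) nat (map sumn (reshape cs n)) (pushT_proof cs n).

Lemma pushE (cs : seq nat) (n : (sumn cs).-tuple nat) :
  XTF (pushT n) = XTF n.
Proof.
rewrite /XTF /= -sumn_flatten reshapeKr //.
by rewrite size_tuple.
Qed.

Definition XTmap (cs : seq nat) : Hom (XTob (size cs)) (XTob (sumn cs)) :=
  tupH (F := @XTF (sumn cs))
       (fun n => compH (projH (F := @XTF (size cs)) (pushT n)) (castH (pushE n))).

Definition tup (N : nat) (s : seq nat) : N.-tuple nat := insubd (nseq_tuple N 0) s.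

Fixpoint blocksL (Ns : seq nat) (n : seq nat) {struct Ns} : seq (seq (Ob V)) :=
  match Ns with
  | [::] => [::]
  | N :: Ns' => nseq (sumn (tup N (take N n))) X :: blocksL Ns' (drop N n)
  end.

Fixpoint prL (Ns : seq nat) (n : seq nat) {struct Ns} :
  HomL (@Hom V) (map XTob Ns) (map tensor (blocksL Ns n)) :=
  match Ns return HomL (@Hom V) (map XTob Ns) (map tensor (blocksL Ns n)) with
  | [::] => tt
  | N :: Ns' => (projH (F := @XTF N) (tup N (take N n)), prL Ns' (drop N n))
  end.

Lemma blocks_flatten (Ns : seq nat) (s : seq nat) :
  size s = sumn Ns -> flatten (blocksL Ns s) = nseq (sumn s) X.
Proof.
elim: Ns s => [|N Ns IH] s /=.
  by case: s.
move=> hs; have hN : size (take N s) == N.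
  by rewrite size_take hs; case: ltnP => // h; apply/eqP/anti_leq;
     rewrite h leq_addr.
rewrite insubdK // IH; last by rewrite size_drop hs addKn.
by rewrite -nseqD -sumn_cat cat_take_drop.
Qed.

Lemma blocksE (Ns : seq nat) (n : (sumn Ns).-tuple nat) :
  tensor (flatten (blocksL Ns n)) = XTF n.
Proof. by rewrite /XTF blocks_flatten // size_tuple. Qed.

Definition XTchi (Ns : seq nat) : Hom (tensor (map XTob Ns)) (XTob (sumn Ns)) :=
  tupH (F := @XTF (sumn Ns))
       (fun n => compH (tensorH (prL Ns n))
                       (compH (lam (blocksL Ns n)) (castH (blocksE n)))).

Definition XT_h : hdata V := HData XTob XTmap XTchi.

Definition tup1 : 1.-tuple nat := [tuple 1].

Lemma xt1_eq : XTF tup1 = X.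
Proof. by rewrite /XTF /= tensor1. Qed.
End XT.

Definition check (V : MonCatData) (C : Ob V)
    (Delta : forall n, Hom C (tensor (nseq n C))) (X : Ob V)
    (t : hCoalgHom (coalg_h Delta) (XT_h X)) : Hom C X :=
  compH (castH (esym (tensor1 C)))
        (compH (sval t 1)
               (compH (projH (F := @XTF V X 1) (tup1)) (castH (xt1_eq X)))).

From mathcomp Require Import all_boot.
From Stdlib Require Import ProofIrrelevance FunctionalExtensionality Eqdep ClassicalEpsilon.

Set Implicit Arguments.
Unset Strict Implicit.
Unset Printing Implicit Defensive.

(* A morphism t : C -> X~T is determined by its components t(I) pr_n.  Applying
   chi to the partition of I into singletons writes t(I) pr_n as the tensor
   product of the t(1) pr_(n_i), and naturality along n_i -> 1, evaluated at the
   projection onto (1, ..., 1), writes t(1) pr_a as Delta_a followed by the a-th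
   tensor power of t(1) pr_1.  Hence
     t(I) pr_n = ((x)_i Delta_(n_i)) lambda (t(1) pr_1)^((x) ||n||),
   so t is determined by t(1) pr_1.  Conversely, for any f : C -> X this formula
   defines a morphism of homotopy coalgebras: naturality follows from
   coassociativity of Delta, compatibility with chi from the coherence of
   lambda. *)

Lemma flatten_map_nseq (T : Type) (x : T) (cs : seq nat) :
  flatten [seq nseq k x | k <- cs] = nseq (sumn cs) x.
Proof. by elim: cs => [|c cs IH] //=; rewrite IH nseqD. Qed.

Lemma sumn_nseq1 (k : nat) : sumn (nseq k 1) = k.
Proof. by rewrite sumn_nseq mul1n. Qed.

Lemma val_tup (N : nat) (s : seq nat) : size s = N -> tval (tup N s) = s.
Proof. by move=> hs; rewrite val_insubd hs eqxx. Qed.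

Section MonoidalCategory.
Variable V : MonCatData.
Hypothesis hV : is_Monoidal V.

Lemma comp1H (A B : Ob V) (f : Hom A B) : compH (idH A) f = f.
Proof. by case: hV => [[]]. Qed.

Lemma compH1 (A B : Ob V) (f : Hom A B) : compH f (idH B) = f.
Proof. by case: hV => [[]]. Qed.

Lemma compHA (A B C D : Ob V) (f : Hom A B) (g : Hom B C) (h : Hom C D) :
  compH (compH f g) h = compH f (compH g h).
Proof. by case: hV => [[]]. Qed.

Lemma tensorH_idL (xs : seq (Ob V)) : tensorH (idL xs) = idH (tensor xs).
Proof. by case: hV => _ []. Qed.

Lemma tensorH_compL (xs ys zs : seq (Ob V))
    (F : HomL (@Hom V) xs ys) (G : HomL (@Hom V) ys zs) :
  tensorH (compL F G) = compH (tensorH F) (tensorH G).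
Proof. by case: hV => _ []. Qed.

Lemma tensorH_single (x y : Ob V) (f : Hom x y) :
  @tensorH V [:: x] [:: y] (f, tt) =
  compH (castH (tensor1 x)) (compH f (castH (esym (tensor1 y)))).
Proof. by case: hV => _ []. Qed.

Lemma lam_natural (L L' : seq (seq (Ob V))) (F : HomL (HomL (@Hom V)) L L') :
  compH (tensorH (mapTH F)) (lam L') = compH (lam L) (tensorH (flattenH F)).
Proof. by case: hV => _ _ []. Qed.

Lemma lam_singletons (xs : seq (Ob V)) :
  lam (map (fun x => [:: x]) xs) = castH (lamid_eq xs).
Proof. by case: hV => _ _ []. Qed.

Lemma lam_single (xs : seq (Ob V)) : lam [:: xs] = castH (lam1_eq xs).
Proof. by case: hV => _ _ []. Qed.

Lemma lam_coherence (LLL : seq (seq (seq (Ob V)))) :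
  compH (compH (lam (map (map tensor) LLL)) (castH (coh_eq1 LLL)))
        (lam (flatten LLL)) =
  compH (compH (tensorH (lamL LLL)) (lam (map flatten LLL)))
        (castH (coh_eq2 LLL)).
Proof. by case: hV => _ _ []. Qed.

Lemma projH_tup (T : countType) (F : T -> Ob V) (A : Ob V)
    (g : forall t, Hom A (F t)) (t : T) :
  compH (tupH g) (projH t) = g t.
Proof. by case: hV => _ _ _ []. Qed.

Lemma prodH_ext (T : countType) (F : T -> Ob V) (A : Ob V) (h h' : Hom A (prodO F)) :
  (forall t, compH h (projH t) = compH h' (projH t)) -> h = h'.
Proof.
case: hV => _ _ _ [_ tupE] E; rewrite (tupE _ _ _ h) (tupE _ _ _ h').
by congr tupH; apply: functional_extensionality_dep.
Qed.

Lemma castH_comp (A B D : Ob V) (e1 : A = B) (e2 : B = D) :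
  compH (castH e1) (castH e2) = castH (etrans e1 e2).
Proof. by case: D / e2; rewrite compH1. Qed.

Lemma castH_compA (A B D E : Ob V) (e1 : A = B) (e2 : B = D) (h : Hom D E) :
  compH (castH e1) (compH (castH e2) h) = compH (castH (etrans e1 e2)) h.
Proof. by rewrite -compHA castH_comp. Qed.

(* Morphisms whose endpoints are only propositionally equal are compared as
   elements of the total space of all morphisms. *)
Definition arrow := {A : Ob V & {B : Ob V & Hom A B}}.
Definition arr (A B : Ob V) (f : Hom A B) : arrow := existT _ A (existT _ B f).

Definition arrowL :=
  {xs : seq (Ob V) & {ys : seq (Ob V) & HomL (@Hom V) xs ys}}.
Definition arrL (xs ys : seq (Ob V)) (F : HomL (@Hom V) xs ys) : arrowL :=
  existT _ xs (existT _ ys F).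

Lemma arr_inj (A B : Ob V) (f g : Hom A B) : arr f = arr g -> f = g.
Proof.
by move=> E; apply: EqdepTheory.inj_pairT2 _ _ _ _ _ (EqdepTheory.inj_pairT2 _ _ _ _ _ E).
Qed.

Lemma arrL_inj (xs ys : seq (Ob V)) (F G : HomL (@Hom V) xs ys) :
  arrL F = arrL G -> F = G.
Proof.
by move=> E; apply: EqdepTheory.inj_pairT2 _ _ _ _ _ (EqdepTheory.inj_pairT2 _ _ _ _ _ E).
Qed.

Lemma arr_ends (A B A' B' : Ob V) (f : Hom A B) (f' : Hom A' B') :
  arr f = arr f' -> (A = A') * (B = B').
Proof.
move=> E; have eA : A = A' := f_equal (@projT1 _ _) E; subst A'.
by have /(f_equal (@projT1 _ _)) := EqdepTheory.inj_pairT2 _ _ _ _ _ E.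
Qed.

Lemma arrL_ends (xs ys xs' ys' : seq (Ob V))
    (F : HomL (@Hom V) xs ys) (F' : HomL (@Hom V) xs' ys') :
  arrL F = arrL F' -> (xs = xs') * (ys = ys').
Proof.
move=> E; have exs : xs = xs' := f_equal (@projT1 _ _) E; subst xs'.
by have /(f_equal (@projT1 _ _)) := EqdepTheory.inj_pairT2 _ _ _ _ _ E.
Qed.

Lemma arr_castH (A B : Ob V) (e : A = B) : arr (castH e) = arr (idH B).
Proof. by case: B / e. Qed.

Lemma arr_lam (L L' : seq (seq (Ob V))) : L = L' -> arr (lam L) = arr (lam L').
Proof. by move=> ->. Qed.

Lemma arr_tensorH (xs ys xs' ys' : seq (Ob V))
    (F : HomL (@Hom V) xs ys) (F' : HomL (@Hom V) xs' ys') :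
  arrL F = arrL F' -> arr (tensorH F) = arr (tensorH F').
Proof.
move=> E; have [exs eys] := arrL_ends E; subst xs' ys'.
by rewrite (arrL_inj E).
Qed.

Lemma arrL_cons (x y x' y' : Ob V) (xs ys xs' ys' : seq (Ob V))
    (f : Hom x y) (f' : Hom x' y')
    (F : HomL (@Hom V) xs ys) (F' : HomL (@Hom V) xs' ys') :
  arr f = arr f' -> arrL F = arrL F' ->
  @arrL (x :: xs) (y :: ys) (f, F) = @arrL (x' :: xs') (y' :: ys') (f', F').
Proof.
move=> Ef EF; have [ex ey] := arr_ends Ef; have [exs eys] := arrL_ends EF.
by subst; rewrite (arr_inj Ef) (arrL_inj EF).
Qed.

Lemma arrL_cat (xs ys xs2 ys2 xs' ys' xs2' ys2' : seq (Ob V))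
    (F : HomL (@Hom V) xs ys) (G : HomL (@Hom V) xs2 ys2)
    (F' : HomL (@Hom V) xs' ys') (G' : HomL (@Hom V) xs2' ys2') :
  arrL F = arrL F' -> arrL G = arrL G' -> arrL (catL F G) = arrL (catL F' G').
Proof.
move=> EF EG; have [e1 e2] := arrL_ends EF; have [e3 e4] := arrL_ends EG.
by subst; rewrite (arrL_inj EF) (arrL_inj EG).
Qed.

(* Composition of arrows, made total by returning the first arrow when the
   endpoints do not match. *)
Definition acomp (p q : arrow) : arrow :=
  match p, q with existT A (existT B f), existT B' (existT D g) =>
    match excluded_middle_informative (B = B') with
    | left e => arr (compH f (compH (castH e) g))
    | right _ => p
    end
  end.

Lemma arr_compE (A B D : Ob V) (f : Hom A B) (g : Hom B D) :
  arr (compH f g) = acomp (arr f) (arr g).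
Proof.
rewrite /acomp /=; case: excluded_middle_informative => [e|] //.
by rewrite (proof_irrelevance _ e erefl) comp1H.
Qed.

Lemma acompA (A B D : Ob V) (f : Hom A B) (g : Hom B D) (r : arrow) :
  acomp (arr f) (acomp (arr g) r) = acomp (arr (compH f g)) r.
Proof.
case: r => D' [E h]; have [eD|neD] := excluded_middle_informative (D = D').
  by subst D'; rewrite -[existT _ D _]/(arr h) -!arr_compE compHA.
have mismatch (A' B' : Ob V) (f' : Hom A' B') :
    B' <> D' -> acomp (arr f') (existT _ D' (existT _ E h)) = arr f'.
  by rewrite /acomp /=; case: excluded_middle_informative.
by rewrite !mismatch // arr_compE.
Qed.

Lemma acomp_castH (A B B' : Ob V) (f : Hom A B) (e : B = B') :
  acomp (arr f) (arr (castH e)) = arr f.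
Proof. by rewrite -arr_compE; case: B' / e; rewrite compH1. Qed.

Lemma acomp_id (A B B' : Ob V) (f : Hom A B) :
  B = B' -> acomp (arr f) (arr (idH B')) = arr f.
Proof. by move=> <-; rewrite -arr_compE compH1. Qed.

Lemma id_acomp (A B : Ob V) (g : Hom A B) : acomp (arr (idH A)) (arr g) = arr g.
Proof. by rewrite -arr_compE comp1H. Qed.

Lemma id_acompA (A B : Ob V) (g : Hom A B) (r : arrow) :
  acomp (arr (idH A)) (acomp (arr g) r) = acomp (arr g) r.
Proof. by rewrite acompA comp1H. Qed.

Lemma acomp_dom (A B : Ob V) (g : Hom A B) (r : arrow) :
  projT1 (acomp (arr g) r) = A.
Proof. by case: r => D [E h]; rewrite /acomp /=; case: excluded_middle_informative. Qed.

Lemma id_acomp_dom (A : Ob V) (q : arrow) :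
  projT1 q = A -> acomp (arr (idH A)) q = q.
Proof. by case: q => A' [D h] /= <-; exact: id_acomp. Qed.

Fixpoint nseqH (A B : Ob V) (f : Hom A B) (m : nat) :
    HomL (@Hom V) (nseq m A) (nseq m B) :=
  match m with 0 => tt | m'.+1 => (f, nseqH f m') end.

Lemma arrL_nseqH_add (A B : Ob V) (f : Hom A B) (a b : nat) :
  arrL (nseqH f (a + b)) = arrL (catL (nseqH f a) (nseqH f b)).
Proof. by elim: a => [|a IH] //=; apply: arrL_cons. Qed.

Ltac arrow_simpl :=
  repeat rewrite compHA; repeat rewrite castH_comp; repeat rewrite castH_compA;
  repeat first [rewrite -acompA | rewrite arr_compE];
  repeat rewrite acomp_castH; repeat rewrite arr_castH;
  repeat rewrite id_acompA; repeat rewrite id_acomp.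

Section Lift.
Variables (C X : Ob V) (Delta : forall n : nat, Hom C (tensor (nseq n C))).
Hypothesis hC : is_coalgebra Delta.

Local Notation nC := (fun k : nat => nseq k C).
Local Notation nX := (fun k : nat => nseq k X).

Fixpoint DeltaLL (B : seq (seq nat)) :
    HomL (HomL (@Hom V)) (map nC (map size B)) (map (map tensor) (map (map nC) B)) :=
  match B with [::] => tt | b :: B' => (DeltaL Delta b, DeltaLL B') end.

Lemma arrL_DeltaL_cat (b c : seq nat) :
  arrL (DeltaL Delta (b ++ c)) = arrL (catL (DeltaL Delta b) (DeltaL Delta c)).
Proof. by elim: b => [|a b IH] //=; apply: arrL_cons. Qed.

Lemma arrL_flattenH_DeltaLL (B : seq (seq nat)) :
  arrL (flattenH (DeltaLL B)) = arrL (DeltaL Delta (flatten B)).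
Proof. by elim: B => [|b B IH] //=; rewrite arrL_DeltaL_cat; apply: arrL_cat. Qed.

Lemma tensor_flatten_nseq_shape (B : seq (seq nat)) :
  tensor (flatten (map nC (map size B))) = tensor (nseq (size (flatten B)) C).
Proof. by rewrite flatten_map_nseq size_flatten. Qed.

Lemma tensor_nseq_sumn_shape (B : seq (seq nat)) :
  tensor (nseq (sumn (map size B)) C) = tensor (nseq (size (flatten B)) C).
Proof. by rewrite size_flatten. Qed.

(* Coherence of lambda for the composite of the block maps of [B] and of
   [map size B], combined with the naturality of lambda. *)
Lemma lam_DeltaLL (B : seq (seq nat)) :
  arr (compH (tensorH (mapTH (DeltaLL B)))
        (compH (tensorH (lamL (map (map nC) B)))
               (lam (map flatten (map (map nC) B))))) =
  arr (compH (lam (map nC (map size B))) (compH (castH (tensor_flatten_nseq_shape B))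
        (compH (tensorH (DeltaL Delta (flatten B))) (lam (map nC (flatten B)))))).
Proof.
have := f_equal (@arr _ _) (lam_coherence (map (map nC) B)).
arrow_simpl => <-; arrow_simpl.
rewrite acompA lam_natural -acompA.
congr acomp; congr acomp; first exact: arr_tensorH (arrL_flattenH_DeltaLL B).
by apply: arr_lam; rewrite map_flatten.
Qed.

(* The component ((x)_i Delta_(n_i)) lambda f^((x) ||n||) of the morphism
   determined by f; locked so that [arrow_simpl] does not unfold it. *)
Definition lift_pr_def (f : Hom C X) (n : seq nat) :
    Hom (tensor (nseq (size n) C)) (tensor (nseq (sumn n) X)) :=
  compH (tensorH (DeltaL Delta n))
    (compH (lam (map nC n))
           (compH (castH (flat_nseq_eq C n)) (tensorH (nseqH f (sumn n))))).
Fact lift_pr_key : unit. Proof. exact: tt. Qed.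
Definition lift_pr := locked_with lift_pr_key lift_pr_def.
Lemma lift_prE : lift_pr = lift_pr_def. Proof. exact: unlock. Qed.

Lemma arr_Delta_sumn (b : seq nat) :
  arr (Delta (sumn b)) =
  arr (compH (compH (Delta (size b)) (tensorH (DeltaL Delta b))) (lam (map nC b))).
Proof. by case: hC => _ ->; rewrite /coalg_map; arrow_simpl. Qed.

Lemma arrL_DeltaL_sumn (B : seq (seq nat)) :
  arrL (DeltaL Delta (map sumn B)) =
  arrL (compL (compL (DeltaL Delta (map size B)) (mapTH (DeltaLL B)))
              (lamL (map (map nC) B))).
Proof. by elim: B => [|b B IH] //=; apply: arrL_cons; first exact: arr_Delta_sumn. Qed.

Lemma lift_pr_sumn (f : Hom C X) (B : seq (seq nat)) :
  arr (lift_pr f (map sumn B)) =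
  arr (compH (coalg_map Delta (map size B))
             (compH (castH (tensor_nseq_sumn_shape B)) (lift_pr f (flatten B)))).
Proof.
rewrite lift_prE /lift_pr_def /coalg_map; arrow_simpl.
rewrite (arr_tensorH (arrL_DeltaL_sumn B)) !tensorH_compL; arrow_simpl.
rewrite (@arr_lam _ (map flatten (map (map nC) B))); last first.
  by rewrite -!map_comp; apply: eq_map => b /=; rewrite flatten_map_nseq.
rewrite (acompA (tensorH (lamL _))) (acompA (tensorH (mapTH _))) lam_DeltaLL.
by arrow_simpl; rewrite sumn_flatten.
Qed.

Local Notation bC := (fun b : seq nat => nseq (sumn b) C).
Local Notation bX := (fun b : seq nat => nseq (sumn b) X).

Fixpoint nseqHL (f : Hom C X) (B : seq (seq nat)) :
    HomL (HomL (@Hom V)) (map bC B) (map bX B) :=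
  match B with [::] => tt | b :: B' => (nseqH f (sumn b), nseqHL f B') end.

Fixpoint flat_nseq_castL (B : seq (seq nat)) :
    HomL (@Hom V) (map tensor (map flatten (map (map nC) B))) (map tensor (map bC B)) :=
  match B with [::] => tt | b :: B' => (castH (flat_nseq_eq C b), flat_nseq_castL B') end.

Definition lift_prL (f : Hom C X) (B : seq (seq nat)) :
    HomL (@Hom V) (map tensor (map nC (map size B))) (map tensor (map bX B)) :=
  compL (compL (compL (mapTH (DeltaLL B)) (lamL (map (map nC) B))) (flat_nseq_castL B))
        (mapTH (nseqHL f B)).

Lemma arrL_flat_nseq_castL (B : seq (seq nat)) :
  arrL (flat_nseq_castL B) = arrL (idL (map tensor (map bC B))).
Proof. by elim: B => [|b B IH] //=; apply: arrL_cons; first exact: arr_castH. Qed.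

Lemma arrL_flattenH_nseqHL (f : Hom C X) (B : seq (seq nat)) :
  arrL (flattenH (nseqHL f B)) = arrL (nseqH f (sumn (map sumn B))).
Proof. by elim: B => [|b B IH] //=; rewrite arrL_nseqH_add; apply: arrL_cat. Qed.

Lemma lift_prL_lam (f : Hom C X) (B : seq (seq nat)) :
  arr (compH (tensorH (lift_prL f B)) (lam (map bX B))) =
  arr (compH (lam (map nC (map size B)))
             (compH (castH (tensor_flatten_nseq_shape B)) (lift_pr f (flatten B)))).
Proof.
rewrite /lift_prL lift_prE /lift_pr_def !tensorH_compL; arrow_simpl.
rewrite (arr_tensorH (arrL_flat_nseq_castL B)) tensorH_idL id_acompA.
rewrite -(arr_compE (tensorH (mapTH (nseqHL f B)))) lam_natural arr_compE.
rewrite (@arr_lam (map bC B) (map flatten (map (map nC) B))); last first.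
  by rewrite -!map_comp; apply: eq_map => b /=; rewrite flatten_map_nseq.
rewrite (acompA (tensorH (lamL _))) (acompA (tensorH (mapTH _))) lam_DeltaLL.
arrow_simpl; rewrite (arr_tensorH (arrL_flattenH_nseqHL f B)).
by rewrite sumn_flatten.
Qed.

Lemma tensor_nseq_size_tuple (k : nat) (n : k.-tuple nat) :
  tensor (nseq k C) = tensor (nseq (size n) C).
Proof. by rewrite size_tuple. Qed.

Definition lift_proj (f : Hom C X) (k : nat) (n : k.-tuple nat) :
    Hom (tensor (nseq k C)) (XTF X n) :=
  compH (castH (tensor_nseq_size_tuple n)) (lift_pr f n).

Definition lift (f : Hom C X) (k : nat) : Hom (tensor (nseq k C)) (XTob X k) :=
  tupH (F := @XTF V X k) (@lift_proj f k).

Lemma lift_projH (f : Hom C X) (k : nat) (n : k.-tuple nat) :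
  compH (lift f k) (projH n) = lift_proj f n.
Proof. exact: projH_tup. Qed.

Lemma lift_hmap (f : Hom C X) (cs : seq nat) :
  compH (lift f (size cs)) (XTmap X cs) = compH (coalg_map Delta cs) (lift f (sumn cs)).
Proof.
apply: prodH_ext => n; have hn : size n = sumn cs by rewrite size_tuple.
rewrite (compHA (lift f _)) (compHA (coalg_map Delta cs)) lift_projH.
rewrite /XTmap projH_tup -compHA lift_projH.
apply: arr_inj; rewrite /lift_proj; arrow_simpl.
rewrite [tval _]/= lift_pr_sumn; arrow_simpl.
have -> : map size (reshape cs n) = cs by apply: reshapeKl; rewrite hn.
by rewrite reshapeKr ?hn.
Qed.

Lemma lift_prL_reshape (f : Hom C X) (Ns s : seq nat) : size s = sumn Ns ->
  arrL (compL (@mapHL V (fun n => tensor (nseq n C)) (XTob X) (lift f) Ns)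
              (prL X Ns s)) =
  arrL (lift_prL f (reshape Ns s)).
Proof.
elim: Ns s => [|N Ns IH] s hs //=.
apply: arrL_cons; last by apply: IH; rewrite size_drop hs /= addKn.
have hN : size (take N s) = N by rewrite size_takel // hs /= leq_addr.
by rewrite lift_projH /lift_proj lift_prE /lift_pr_def; arrow_simpl; rewrite val_tup.
Qed.

Lemma blocksL_reshape (Ns s : seq nat) : size s = sumn Ns ->
  blocksL X Ns s = map (fun b => nseq (sumn b) X) (reshape Ns s).
Proof.
elim: Ns s => [|N Ns IH] s hs //=.
have hN : size (take N s) = N by rewrite size_takel // hs /= leq_addr.
by rewrite val_tup // IH // size_drop hs /= addKn.
Qed.

Lemma lift_hchi (f : Hom C X) (Ns : seq nat) :
  compH (coalg_chi C Ns) (lift f (sumn Ns)) =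
  compH (tensorH (@mapHL V (fun n => tensor (nseq n C)) (XTob X) (lift f) Ns))
        (XTchi X Ns).
Proof.
apply: prodH_ext => n; have hn : size n = sumn Ns by rewrite size_tuple.
rewrite !compHA lift_projH /XTchi projH_tup.
apply: arr_inj; rewrite /lift_proj; arrow_simpl.
rewrite (acompA (tensorH (mapHL _ _))) -tensorH_compL.
rewrite (arr_tensorH (lift_prL_reshape f hn)) (arr_lam (blocksL_reshape hn)).
rewrite -arr_compE lift_prL_lam; arrow_simpl.
have -> : map size (reshape Ns n) = Ns by apply: reshapeKl; rewrite hn.
by rewrite reshapeKr ?hn.
Qed.

Lemma lift_is_hmorph (f : Hom C X) : is_hmorph (A := coalg_h Delta) (B := XT_h X) (lift f).
Proof. by split; [exact: lift_hmap | exact: lift_hchi]. Qed.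

Definition lift_hmorph (f : Hom C X) : hCoalgHom (coalg_h Delta) (XT_h X) :=
  exist _ (lift f) (lift_is_hmorph f).

Lemma check_lift (f : Hom C X) : check (lift_hmorph f) = f.
Proof.
apply: arr_inj; rewrite /check /= -(compHA (lift f 1)) lift_projH.
rewrite /lift_proj lift_prE /lift_pr_def /= !tensorH_single lam_single.
by case: hC => -> _; arrow_simpl.
Qed.

Section Uniqueness.
Variable t : hCoalgHom (coalg_h Delta) (XT_h X).

Local Notation T := (sval t).

Lemma hmorph_hmap (cs : seq nat) :
  compH (T (size cs)) (XTmap X cs) = compH (coalg_map Delta cs) (T (sumn cs)).
Proof. by case: (proj2_sig t) => H _; exact: H. Qed.

Lemma hmorph_hchi (Ns : seq nat) :
  compH (coalg_chi C Ns) (T (sumn Ns)) =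
  compH (tensorH (@mapHL V (fun n => tensor (nseq n C)) (XTob X) T Ns)) (XTchi X Ns).
Proof. by case: (proj2_sig t) => _ H; exact: H. Qed.

Lemma arr_hmorph_proj (k k' : nat) (u : k.-tuple nat) (u' : k'.-tuple nat) :
  k = k' -> tval u = tval u' ->
  arr (compH (T k) (projH u)) = arr (compH (T k') (projH u')).
Proof. by move=> ek; subst k' => /val_inj ->. Qed.

(* [hchi] for the partition of [size s] into singletons. *)
Lemma hmorph_proj_singletons (s : seq nat) (n : (size s).-tuple nat) : tval n = s ->
  arr (compH (T (size s)) (projH n)) =
  arr (compH (tensorH (compL
         (@mapHL V (fun k => tensor (nseq k C)) (XTob X) T (nseq (size s) 1))
         (prL X (nseq (size s) 1) s)))
       (lam (blocksL X (nseq (size s) 1) s))).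
Proof.
move=> hn; pose o := tup (sumn (nseq (size s) 1)) s.
have ho : tval o = s by rewrite val_tup // sumn_nseq1.
have := f_equal (fun g => arr (compH g (projH o))) (hmorph_hchi (nseq (size s) 1)).
rewrite /= (compHA (tensorH _)) /XTchi projH_tup (compHA (coalg_chi C _)) /coalg_chi.
arrow_simpl; rewrite ho tensorH_compL -acompA => <-.
have -> : map nC (nseq (size s) 1) = map (fun x => [:: x]) (nseq (size s) C).
  by elim: (size s) => //= m ->.
rewrite lam_singletons arr_castH id_acomp_dom; last first.
  by rewrite acomp_dom /=; congr tensor; elim: (size s) => //= m ->.
by rewrite -!arr_compE; apply: arr_hmorph_proj; rewrite ?sumn_nseq1 ?ho.
Qed.

Lemma arr_hmorph_proj1 : arr (compH (T 1) (projH tup1)) = arr (check t).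
Proof. by rewrite /check; arrow_simpl. Qed.

Lemma arrL_hmorph_ones (a : nat) :
  arrL (compL (@mapHL V (fun n => tensor (nseq n C)) (XTob X) T (nseq a 1))
              (prL X (nseq a 1) (nseq a 1))) =
  arrL (nseqH (check t) a).
Proof.
elim: a => [|a IH] //=; rewrite drop0; apply: arrL_cons => //.
by rewrite -arr_hmorph_proj1; apply: (arr_hmorph_proj (erefl 1)); rewrite val_tup ?take0.
Qed.

Lemma hmorph_proj_ones (a : nat) :
  arr (compH (T a) (projH (nseq_tuple a 1))) = arr (tensorH (nseqH (check t) a)).
Proof.
have hs : size (nseq a 1) = a by rewrite size_nseq.
rewrite (@arr_hmorph_proj _ _ _ (tup (size (nseq a 1)) (nseq a 1))) ?val_tup //.
rewrite hmorph_proj_singletons ?val_tup // hs arr_compE.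
rewrite (arr_tensorH (arrL_hmorph_ones a)).
have -> : blocksL X (nseq a 1) (nseq a 1) = map (fun x => [:: x]) (nseq a X).
  by elim: a {hs} => //= a IH; rewrite drop0 take0 val_tup // IH.
rewrite lam_singletons arr_castH acomp_id //.
by congr tensor; elim: a {hs} => //= a <-.
Qed.

(* [hmap] along [a -> 1], evaluated at the projection onto [(1, ..., 1)]. *)
Lemma hmorph_proj1 (a : nat) :
  arr (compH (T 1) (projH [tuple a])) =
  arr (compH (Delta a) (tensorH (nseqH (check t) a))).
Proof.
pose o := tup (sumn [:: a]) (nseq a 1).
have ho : tval o = nseq a 1 by rewrite val_tup // size_nseq /= addn0.
have := f_equal (fun g => arr (compH g (projH o))) (hmorph_hmap [:: a]).
rewrite /coalg_map /= tensorH_single lam_single; arrow_simpl.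
rewrite -(arr_compE (XTmap X [:: a])) /XTmap projH_tup; arrow_simpl.
rewrite -(arr_compE (T 1)) -(arr_compE (T (a + 0))).
rewrite (@arr_hmorph_proj _ _ o (nseq_tuple a 1) (addn0 a) ho) hmorph_proj_ones.
rewrite (@arr_hmorph_proj 1 1 (pushT o) [tuple a]) //; last first.
  by rewrite /= ho take_oversize ?size_nseq // sumn_nseq1.
by rewrite -(arr_compE (T 1)).
Qed.

Fixpoint nseqH_blocks (s : seq nat) : HomL (HomL (@Hom V)) (map nC s) (map nX s) :=
  match s with [::] => tt | a :: s' => (nseqH (check t) a, nseqH_blocks s') end.

Lemma arrL_flattenH_nseqH_blocks (s : seq nat) :
  arrL (flattenH (nseqH_blocks s)) = arrL (nseqH (check t) (sumn s)).
Proof. by elim: s => [|a s IH] //=; rewrite arrL_nseqH_add; apply: arrL_cat. Qed.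

Lemma arrL_hmorph_blocks (s : seq nat) :
  arrL (compL (@mapHL V (fun n => tensor (nseq n C)) (XTob X) T (nseq (size s) 1))
              (prL X (nseq (size s) 1) s)) =
  arrL (compL (DeltaL Delta s) (mapTH (nseqH_blocks s))).
Proof.
elim: s => [|a s IH] //=; rewrite drop0; apply: arrL_cons => //.
by rewrite -hmorph_proj1; apply: (arr_hmorph_proj (erefl 1)); rewrite val_tup ?take0.
Qed.

Lemma blocksL_singletons (s : seq nat) : blocksL X (nseq (size s) 1) s = map nX s.
Proof. by elim: s => [|a s IH] //=; rewrite drop0 take0 val_tup // IH /= addn0. Qed.

Lemma hmorph_projE (k : nat) (n : k.-tuple nat) :
  arr (compH (T k) (projH n)) = arr (lift_pr (check t) n).
Proof.
rewrite (@arr_hmorph_proj _ _ n (tup (size n) n) (esym (size_tuple n))) ?val_tup //.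
rewrite hmorph_proj_singletons ?val_tup // arr_compE (arr_tensorH (arrL_hmorph_blocks n)).
rewrite (arr_lam (blocksL_singletons n)) -arr_compE tensorH_compL compHA lam_natural.
rewrite lift_prE /lift_pr_def; arrow_simpl.
by rewrite (arr_tensorH (arrL_flattenH_nseqH_blocks n)).
Qed.

Lemma lift_check : lift (check t) = T.
Proof.
apply: functional_extensionality_dep => k; apply: prodH_ext => n.
by rewrite lift_projH; apply: arr_inj; rewrite hmorph_projE /lift_proj; arrow_simpl.
Qed.

Lemma lift_hmorph_check : lift_hmorph (check t) = t.
Proof.
apply: eq_sig_hprop; first by move=> *; apply: proof_irrelevance.
exact: lift_check.
Qed.

End Uniqueness.
End Lift.
End MonoidalCategory.

Theorem mainTheorem5 (V : MonCatData) (hV : is_Monoidal V) (C : Ob V)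
    (Delta : forall n : nat, Hom C (tensor (nseq n C)))
    (hC : is_coalgebra Delta) (X : Ob V) :
  bijective (@check V C Delta X).
Proof.
exists (lift_hmorph hV hC).
- by move=> t; rewrite lift_hmorph_check.
- by move=> f; rewrite check_lift.
Qed.
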